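(* Let $\alpha,\beta$ be parameters, $q$ an indeterminate, $E_{n,k}(\alpha,\beta,q)$ the numbers defined in the context, and $E_n(x;q)=\sum_{k=0}^nE_{n,k}(\alpha,\beta,q)x^k$. Then: (i) for $n\ge1$, $E_{n}(x;q)=\bigl([\beta]+q^\beta[n-1+\alpha]x\bigr)E_{n-1}(x;q)+(1-x)xq^{\beta}\delta_{x}(E_{n-1}(x;q))$; (ii) for $n\ge0$, $\dfrac{E_{n}(x;q)}{(x;q)_{n+\alpha+\beta}}=\sum_{j\ge 0}x^j\begin{bmatrix}j+\alpha+\beta-1\\ j\end{bmatrix}[j+\beta]^n$; (iii) $\displaystyle\sum_{n\ge 0}\frac{E_{n}(x;q)}{(x;q)_{n+\alpha+\beta}}\frac{t^n}{n!}=\sum_{j\ge 0}x^j\begin{bmatrix}j+\alpha+\beta-1\\ j\end{bmatrix}\exp([j+\beta]t)$; (iv) for $n,j\ge0$, $\displaystyle\sum_{k=0}^{j}\begin{bmatrix}j-k+n+\alpha+\beta-1\\ j-k\end{bmatrix}E_{n,k}(\alpha,\beta,q)=\begin{bmatrix}j+\alpha+\beta-1\\ j\end{bmatrix}[j+\beta]^n$; (v) for $n\ge k\ge0$, $\displaystyle E_{n,k}(\alpha,\beta,q)=\sum_{j=0}^{k}\begin{bmatrix}n+\alpha+\beta\\ k-j\end{bmatrix}\begin{bmatrix}j+\alpha+\beta-1\\ j\end{bmatrix}(-1)^{k-j}q^{\binom{k-j}{2}}[\beta+j]^{n}$.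
   Context: For a real $x$, $[x]=\frac{1-q^x}{1-q}$. The numbers $E_{n,k}(\alpha,\beta,q)$ are determined by $E_{0,0}=1$, $E_{n,k}=0$ if $k\notin\{0,\dots,n\}$, and for $n\ge1$: $E_{n,k}(\alpha,\beta,q)=q^{\beta+k-1}[n-k+\alpha]E_{n-1,k-1}(\alpha,\beta,q)+[k+\beta]E_{n-1,k}(\alpha,\beta,q)$. The $q$-derivative is $\delta_x p(x)=\frac{p(qx)-p(x)}{(q-1)x}$. $q$-Pochhammer: $(x;q)_\infty=\prod_{i\ge0}(1-xq^i)$ and for real $N$, $(x;q)_N=(x;q)_\infty/(xq^N;q)_\infty$ (so $(x;q)_0=1$, $(x;q)_n=\prod_{i=0}^{n-1}(1-xq^i)$ for integers $n\ge1$). For real $x$ and integer $n\ge0$, $\begin{bmatrix}x\\ n\end{bmatrix}=\frac{(q^{x-n+1};q)_n}{(q;q)_n}$. *)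

From Stdlib Require Import Reals Factorial.
From Coquelicot Require Import Coquelicot.
Open Scope R_scope.

Definition qnum (q x : R) : R := (1 - Rpower q x) / (1 - q).

(* E_{n,k}(alpha,beta,q); out-of-range values (k > n) are 0 by the recursion. *)
Fixpoint Enk (alpha beta q : R) (n k : nat) : R :=
  match n with
  | O => match k with O => 1 | S _ => 0 end
  | S m =>
      (match k with
       | O => 0
       | S k' => Rpower q (beta + INR k - 1)
                  * qnum q (INR n - INR k + alpha) * Enk alpha beta q m k'
       end)
      + qnum q (INR k + beta) * Enk alpha beta q m k
  end.

Definition En (alpha beta q : R) (n : nat) (x : R) : R :=
  sum_f_R0 (fun k => Enk alpha beta q n k * x ^ k) n.

Definition qderiv (q : R) (p : R -> R) (x : R) : R :=
  (p (q * x) - p x) / ((q - 1) * x).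

Fixpoint qpoch_fin (a q : R) (n : nat) : R :=
  match n with
  | O => 1
  | S m => qpoch_fin a q m * (1 - a * q ^ m)
  end.

Definition qpoch_inf (a q : R) : R := real (Lim_seq (fun m => qpoch_fin a q m)).

Definition qpochR (a q N : R) : R := qpoch_inf a q / qpoch_inf (a * Rpower q N) q.

Definition qbinom (q x : R) (n : nat) : R :=
  qpoch_fin (Rpower q (x - INR n + 1)) q n / qpoch_fin q q n.

(* Let C_z(m) = (z;q)_m/(q;q)_m, the coefficients of the q-binomial series
   sum_m C_z(m) x^m = (zx;q)_oo/(x;q)_oo.  On coefficient sequences [m] acts as
   x * qderiv, which obeys a q-Leibniz rule; with [m+beta] = [beta] + q^beta [m]
   the recurrence of E_{n,k} then says that convolving E_{n+1} with
   C_{q^(n+1+alpha+beta)} gives the convolution of E_n with C_{q^(n+alpha+beta)}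
   multiplied termwise by [m+beta].  Iterating from E_0 yields (iv), and
   convolving (iv) with the inverse sequence of C_z, which is (-1)^m q^(m choose 2)
   times a q-binomial coefficient, yields (v); (i) is the recurrence read on
   generating polynomials.  Multiplying the polynomial E_n(x) by the q-binomial
   series and reading off coefficients with (iv) gives (ii), and (iii) is (ii)
   summed against t^n/n!, the two absolutely convergent summations being
   interchanged. *)

From Stdlib Require Import Reals Factorial Lra Lia FunctionalExtensionality.
From Coquelicot Require Import Coquelicot.
Open Scope R_scope.

(** * Convolution and evaluation of coefficient sequences *)

Definition conv (f g : nat -> R) (m : nat) : R :=
  sum_f_R0 (fun i => f i * g (m - i)%nat) m.

Definition shift (f : nat -> R) (m : nat) : R :=
  match m with O => 0 | S m' => f m' end.

Definition delta0 (m : nat) : R := match m with O => 1 | S _ => 0 end.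

Lemma conv_plus_l f1 f2 g m :
  conv (fun i => f1 i + f2 i) g m = conv f1 g m + conv f2 g m.
Proof. unfold conv; rewrite <- plus_sum; apply sum_eq; intros; ring. Qed.

Lemma conv_minus_l f1 f2 g m :
  conv (fun i => f1 i - f2 i) g m = conv f1 g m - conv f2 g m.
Proof. unfold conv; rewrite <- minus_sum; apply sum_eq; intros; ring. Qed.

Lemma conv_scal_l c f g m : conv (fun i => c * f i) g m = c * conv f g m.
Proof. unfold conv; rewrite scal_sum; apply sum_eq; intros; ring. Qed.

Lemma conv_minus_r f g1 g2 m :
  conv f (fun i => g1 i - g2 i) m = conv f g1 m - conv f g2 m.
Proof. unfold conv; rewrite <- minus_sum; apply sum_eq; intros; ring. Qed.

Lemma conv_scal_r c f g m : conv f (fun i => c * g i) m = c * conv f g m.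
Proof. unfold conv; rewrite scal_sum; apply sum_eq; intros; ring. Qed.

Lemma conv_shift_l f g m : conv (shift f) g m = shift (conv f g) m.
Proof.
  unfold conv; destruct m as [|m]; simpl shift at 2.
  - simpl; ring.
  - rewrite decomp_sum by lia; simpl; rewrite Rmult_0_l, Rplus_0_l.
    apply sum_eq; reflexivity.
Qed.

Lemma conv_shift_r f g m : conv f (shift g) m = shift (conv f g) m.
Proof.
  unfold conv; destruct m as [|m]; simpl shift at 2.
  - simpl; ring.
  - rewrite tech5, Nat.sub_diag; simpl shift at 2; rewrite Rmult_0_r, Rplus_0_r.
    apply sum_eq; intros i Hi.
    replace (S m - i)%nat with (S (m - i)) by lia; reflexivity.
Qed.

Lemma conv_delta0_l g m : conv delta0 g m = g m.
Proof.
  unfold conv; destruct m as [|m]; [simpl; ring|].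
  rewrite decomp_sum, Nat.sub_0_r by lia.
  rewrite sum_eq with (Bn := fun _ => 0) by (intros; simpl; ring).
  rewrite sum_cte; simpl; ring.
Qed.

Lemma conv_delta0_r f m : conv f delta0 m = f m.
Proof.
  unfold conv; destruct m as [|m]; [simpl; ring|].
  rewrite tech5, Nat.sub_diag, sum_eq with (Bn := fun _ => 0).
  - rewrite sum_cte; simpl; ring.
  - intros i Hi; replace (S m - i)%nat with (S (m - i)) by lia; simpl; ring.
Qed.

Lemma conv_cons_l f g :
  conv f g = fun m => f 0%nat * g m + shift (conv (fun k => f (S k)) g) m.
Proof.
  extensionality m; unfold conv; destruct m as [|m]; simpl shift; [simpl; ring|].
  rewrite decomp_sum, Nat.sub_0_r by lia; reflexivity.
Qed.

Lemma conv_assoc f g h m : conv (conv f g) h m = conv f (conv g h) m.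
Proof.
  revert f; induction m as [|m IH]; intros f;
    rewrite (conv_cons_l f g), conv_plus_l, conv_scal_l, conv_shift_l,
      (conv_cons_l f (conv g h)); simpl shift; [reflexivity|].
  rewrite IH; reflexivity.
Qed.

Definition polyval (g : nat -> R) (N : nat) (x : R) : R := sum_f_R0 (fun k => g k * x ^ k) N.

Lemma polyval_plus g1 g2 N x :
  polyval (fun i => g1 i + g2 i) N x = polyval g1 N x + polyval g2 N x.
Proof. unfold polyval; rewrite <- plus_sum; apply sum_eq; intros; ring. Qed.

Lemma polyval_minus g1 g2 N x :
  polyval (fun i => g1 i - g2 i) N x = polyval g1 N x - polyval g2 N x.
Proof. unfold polyval; rewrite <- minus_sum; apply sum_eq; intros; ring. Qed.

Lemma polyval_scal c g N x : polyval (fun i => c * g i) N x = c * polyval g N x.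
Proof. unfold polyval; rewrite scal_sum; apply sum_eq; intros; ring. Qed.

Lemma polyval_shift g N x : polyval (shift g) (S N) x = x * polyval g N x.
Proof.
  unfold polyval; rewrite decomp_sum by lia; simpl; rewrite Rmult_0_l, Rplus_0_l, scal_sum.
  apply sum_eq; intros; simpl; ring.
Qed.

Lemma polyval_S_top0 g N x : g (S N) = 0 -> polyval g (S N) x = polyval g N x.
Proof. intros H; unfold polyval; rewrite tech5, H; ring. Qed.

(** * q-binomial coefficient sequences *)

(* Coefficientwise actions of [x * qderiv q] and of [p(x) |-> p(q x)]. *)
Definition qeuler (q : R) (f : nat -> R) (k : nat) : R := qnum q (INR k) * f k.

Definition qdil (q : R) (f : nat -> R) (k : nat) : R := q ^ k * f k.

Definition qbin_coef (q z : R) (m : nat) : R := qpoch_fin z q m / qpoch_fin q q m.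

Fixpoint qfall (q z : R) (m : nat) : R :=
  match m with O => 1 | S k => qfall q z k * (z - q ^ k) end.

(* [qbin_inv q z m] is [z ^ m * qbin_coef q (/ z) m]: the coefficients of
   [(x;q)_oo / (zx;q)_oo], hence the convolution inverse of [qbin_coef q z]. *)
Definition qbin_inv (q z : R) (m : nat) : R := qfall q z m / qpoch_fin q q m.

Lemma qpoch_fin_S_l a q k : qpoch_fin a q (S k) = (1 - a) * qpoch_fin (a * q) q k.
Proof.
  induction k as [|k IH]; [simpl; ring|].
  change (qpoch_fin a q (S (S k))) with (qpoch_fin a q (S k) * (1 - a * q ^ S k)).
  rewrite IH; simpl; ring.
Qed.

Lemma qfall_S_dilate q z k : qfall q (z * q) (S k) = qfall q z k * q ^ k * (z * q - 1).
Proof.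
  induction k as [|k IH]; [simpl; ring|].
  change (qfall q (z * q) (S (S k))) with (qfall q (z * q) (S k) * (z * q - q ^ S k)).
  rewrite IH; simpl; ring.
Qed.

Lemma qfall_1_S q m : qfall q 1 (S m) = 0.
Proof. induction m as [|m IH]; simpl in *; [ring | rewrite IH; ring]. Qed.

Lemma qfall_eq_signed_qpoch q m z : 0 < q ->
  (-1) ^ m * q ^ (m * (m - 1) / 2) * qpoch_fin (z / q ^ m * q) q m = qfall q z m.
Proof.
  intros hq0; revert z; induction m as [|m IH]; intros z; [simpl; ring|].
  assert (Hqm : q ^ m <> 0) by (apply pow_nonzero; lra).
  rewrite qpoch_fin_S_l.
  replace (z / q ^ S m * q * q) with (z / q ^ m * q) by (simpl; field; split; lra).
  replace (S m * (S m - 1) / 2)%nat with (m * (m - 1) / 2 + m)%nat.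
  - rewrite pow_add; simpl qfall; rewrite <- IH.
    replace (z / q ^ S m * q) with (z / q ^ m) by (simpl; field; split; lra).
    simpl pow at 1; field; exact Hqm.
  - replace (S m * (S m - 1))%nat with (m * (m - 1) + m * 2)%nat by (destruct m; simpl; nia).
    rewrite Nat.div_add by lia; reflexivity.
Qed.

Lemma Rpower_pos x y : 0 < Rpower x y.
Proof. apply exp_pos. Qed.

Lemma qbinom_eq_qbin_coef q c j :
  qbinom q (INR j + c - 1) j = qbin_coef q (Rpower q c) j.
Proof. unfold qbinom, qbin_coef; do 3 f_equal; ring. Qed.

Lemma continuous_Rmult (f g : R -> R) x :
  continuous f x -> continuous g x -> continuous (fun z => f z * g z) x.
Proof. intros; apply (continuous_mult f g); assumption. Qed.

Lemma continuous_qpoch_fin q m x : continuous (fun z => qpoch_fin z q m) x.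
Proof.
  induction m as [|m IH]; simpl; [apply continuous_const|].
  apply continuous_Rmult; [exact IH|].
  apply (continuous_minus (fun _ => 1) (fun z => z * q ^ m)); [apply continuous_const|].
  apply continuous_Rmult; [apply continuous_id | apply continuous_const].
Qed.

Lemma continuous_qfall q m x : continuous (fun z => qfall q z m) x.
Proof.
  induction m as [|m IH]; simpl; [apply continuous_const|].
  apply continuous_Rmult; [exact IH|].
  apply (continuous_minus (fun z => z) (fun _ => q ^ m));
    [apply continuous_id | apply continuous_const].
Qed.

Lemma continuous_conv (F G : R -> nat -> R) m x :
  (forall i, continuous (fun z => F z i) x) -> (forall i, continuous (fun z => G z i) x) ->
  continuous (fun z => conv (F z) (G z) m) x.
Proof.
  intros HF HG; unfold conv; generalize m at 2; intros N.
  induction N as [|N IH]; simpl.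
  - apply continuous_Rmult; auto.
  - apply (continuous_plus (fun z => sum_f_R0 (fun i => F z i * G z (m - i)%nat) N)); [exact IH|].
    apply continuous_Rmult; auto.
Qed.

Lemma dilation_invariant_const (f : R -> R) r :
  0 < r < 1 -> (forall w, f (r * w) = f w) -> continuous f 0 -> forall z, f z = f 0.
Proof.
  intros Hr Hf Hc z.
  assert (Hiter : forall k, f (r ^ k * z) = f z).
  { induction k as [|k IH]; simpl; [rewrite Rmult_1_l; reflexivity|].
    rewrite Rmult_assoc, Hf; exact IH. }
  assert (Hlim : is_lim_seq (fun k => r ^ k * z) 0).
  { replace 0 with (0 * z) by ring; apply is_lim_seq_mult'; [|apply is_lim_seq_const].
    apply is_lim_seq_geom; rewrite Rabs_pos_eq; lra. }
  apply (is_lim_seq_continuous f) in Hlim; [|apply continuity_pt_filterlim; exact Hc].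
  apply (is_lim_seq_ext _ (fun _ => f z)) in Hlim; [|exact Hiter].
  apply is_lim_seq_unique in Hlim; rewrite Lim_seq_const in Hlim.
  injection Hlim; auto.
Qed.

Section QSequences.

Variable q : R.
Hypothesis hq0 : 0 < q.
Hypothesis hq1 : q <> 1.

Lemma qnum_plus x y : qnum q (x + y) = qnum q x + Rpower q x * qnum q y.
Proof. unfold qnum; rewrite Rpower_plus; field; lra. Qed.

Lemma qnum_INR k : qnum q (INR k) = (1 - q ^ k) / (1 - q).
Proof. unfold qnum; rewrite Rpower_pow by exact hq0; reflexivity. Qed.

Lemma pow_S_neq1 i : q ^ S i <> 1.
Proof.
  destruct (Rlt_or_le q 1) as [Hlt|Hge].
  - pose proof (pow_lt_1_compat q (S i) (conj (Rlt_le _ _ hq0) Hlt) ltac:(lia)); lra.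
  - pose proof (Rlt_pow_R1 q (S i) ltac:(lra) ltac:(lia)); lra.
Qed.

Lemma qpoch_fin_qq_neq0 k : qpoch_fin q q k <> 0.
Proof.
  induction k as [|k IH]; simpl; [lra|].
  apply Rmult_integral_contrapositive; split; [exact IH|].
  pose proof (pow_S_neq1 k); simpl in *; lra.
Qed.

Lemma qeuler_conv f g m :
  qeuler q (conv f g) m = conv f (qeuler q g) m + conv (qeuler q f) (qdil q g) m.
Proof.
  unfold qeuler, qdil, conv; rewrite scal_sum, <- plus_sum; apply sum_eq; intros i Hi.
  rewrite !qnum_INR.
  replace (q ^ m) with (q ^ (m - i) * q ^ i) by (rewrite <- pow_add; f_equal; lia).
  field; lra.
Qed.

Lemma polyval_qdiff g N x :
  polyval g N (q * x) - polyval g N x = (q - 1) * polyval (qeuler q g) N x.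
Proof.
  unfold polyval, qeuler; rewrite <- minus_sum, scal_sum.
  apply sum_eq; intros i _; rewrite qnum_INR, Rpow_mult_distr by exact hq0; field; lra.
Qed.

Lemma qbin_coef_dilate z :
  qbin_coef q z = fun i => qbin_coef q (z * q) i - z * shift (qbin_coef q (z * q)) i.
Proof.
  extensionality i; unfold qbin_coef; destruct i as [|k]; simpl shift; [simpl; field|].
  rewrite qpoch_fin_S_l; change (qpoch_fin q q (S k)) with (qpoch_fin q q k * (1 - q * q ^ k)).
  change (qpoch_fin (z * q) q (S k)) with (qpoch_fin (z * q) q k * (1 - z * q * q ^ k)).
  pose proof (qpoch_fin_qq_neq0 k); pose proof (pow_S_neq1 k); simpl in *.
  field; repeat split; try lra; assumption.
Qed.

Lemma qeuler_qbin_coef z :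
  qeuler q (qbin_coef q z) = fun i => (1 - z) / (1 - q) * shift (qbin_coef q (z * q)) i.
Proof.
  extensionality i; unfold qeuler, qbin_coef; rewrite qnum_INR.
  destruct i as [|k]; simpl shift; [simpl; field; lra|].
  rewrite qpoch_fin_S_l; change (qpoch_fin q q (S k)) with (qpoch_fin q q k * (1 - q * q ^ k)).
  pose proof (qpoch_fin_qq_neq0 k); pose proof (pow_S_neq1 k); simpl in *.
  field; repeat split; try lra; assumption.
Qed.

Lemma qdil_qbin_coef z :
  qdil q (qbin_coef q z) = fun i => qbin_coef q (z * q) i - shift (qbin_coef q (z * q)) i.
Proof.
  extensionality i; unfold qdil, qbin_coef; destruct i as [|k]; simpl shift; [simpl; field|].
  rewrite qpoch_fin_S_l; change (qpoch_fin q q (S k)) with (qpoch_fin q q k * (1 - q * q ^ k)).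
  change (qpoch_fin (z * q) q (S k)) with (qpoch_fin (z * q) q k * (1 - z * q * q ^ k)).
  pose proof (qpoch_fin_qq_neq0 k); pose proof (pow_S_neq1 k); simpl in *.
  field; repeat split; try lra; assumption.
Qed.

Lemma qbin_inv_dilate z :
  qbin_inv q (z * q) = fun i => qbin_inv q z i - z * shift (qbin_inv q z) i.
Proof.
  extensionality i; unfold qbin_inv; destruct i as [|k]; simpl shift; [simpl; field|].
  rewrite qfall_S_dilate; change (qpoch_fin q q (S k)) with (qpoch_fin q q k * (1 - q * q ^ k)).
  change (qfall q z (S k)) with (qfall q z k * (z - q ^ k)).
  pose proof (qpoch_fin_qq_neq0 k); pose proof (pow_S_neq1 k); simpl in *.
  field; repeat split; try lra; assumption.
Qed.

Lemma conv_qbin_coef_inv_dilate z m :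
  conv (qbin_coef q (z * q)) (qbin_inv q (z * q)) m = conv (qbin_coef q z) (qbin_inv q z) m.
Proof.
  rewrite (qbin_inv_dilate z), (qbin_coef_dilate z).
  rewrite conv_minus_r, conv_scal_r, conv_shift_r, conv_minus_l, conv_scal_l, conv_shift_l.
  reflexivity.
Qed.

(* The left side is a polynomial in [z] invariant under [z -> q z], hence
   constant; at [z = 1] the sequence [qbin_coef q 1] is [delta0]. *)
Lemma conv_qbin_coef_inv z : conv (qbin_coef q z) (qbin_inv q z) = delta0.
Proof.
  extensionality m; set (f := fun z => conv (qbin_coef q z) (qbin_inv q z) m).
  assert (Hinv : exists r, 0 < r < 1 /\ forall w, f (r * w) = f w).
  { destruct (Rlt_or_le q 1) as [Hlt|Hge].
    - exists q; split; [lra|]; intros w; unfold f; rewrite Rmult_comm.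
      apply conv_qbin_coef_inv_dilate.
    - exists (/ q); split.
      + split; [apply Rinv_0_lt_compat; lra|].
        rewrite <- Rinv_1; apply Rinv_lt_contravar; lra.
      + intros w; unfold f; rewrite <- (conv_qbin_coef_inv_dilate (/ q * w)).
        replace (/ q * w * q) with w by (field; lra); reflexivity. }
  destruct Hinv as [r [Hr Hf]].
  assert (Hc : continuous f 0).
  { apply continuous_conv; intros i; unfold qbin_coef, qbin_inv;
      apply continuous_Rmult; try apply continuous_const.
    - apply continuous_qpoch_fin.
    - apply continuous_qfall. }
  change (f z = delta0 m).
  rewrite (dilation_invariant_const f r Hr Hf Hc z),
    <- (dilation_invariant_const f r Hr Hf Hc 1).
  unfold f, conv; destruct m as [|m]; [unfold qbin_coef, qbin_inv; simpl; field|].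
  rewrite sum_eq with (Bn := fun _ => 0); [rewrite sum_cte; simpl; ring|].
  intros [|i] Hi; unfold qbin_coef, qbin_inv.
  - rewrite Nat.sub_0_r, qfall_1_S; unfold Rdiv; ring.
  - rewrite qpoch_fin_S_l; unfold Rdiv; ring.
Qed.

Lemma qbinom_signed_eq_qbin_inv M m :
  qbinom q M m * (-1) ^ m * q ^ (m * (m - 1) / 2) = qbin_inv q (Rpower q M) m.
Proof.
  unfold qbinom, qbin_inv; rewrite <- qfall_eq_signed_qpoch by exact hq0.
  replace (M - INR m + 1) with (M + - INR m + 1) by ring.
  rewrite !Rpower_plus, Rpower_Ropp, Rpower_pow, Rpower_1 by exact hq0.
  unfold Rdiv; field; exact (qpoch_fin_qq_neq0 m).
Qed.

End QSequences.

(** * The numbers E_{n,k} *)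

Lemma Enk_gt a b q n k : (n < k)%nat -> Enk a b q n k = 0.
Proof.
  revert k; induction n as [|n IH]; intros [|k] Hk; try lia; [reflexivity|].
  simpl Enk; rewrite !IH by lia; ring.
Qed.

Section Eulerian.

Variables a b q : R.
Hypothesis hq0 : 0 < q.
Hypothesis hq1 : q <> 1.

Lemma Enk_S_shift n :
  Enk a b q (S n) = fun k => qnum q b * Enk a b q n k
    + Rpower q b * qnum q (INR n + a) * shift (Enk a b q n) k
    + Rpower q b * qeuler q (Enk a b q n) k
    - Rpower q b * shift (qeuler q (Enk a b q n)) k.
Proof.
  extensionality k; unfold qeuler; destruct k as [|k]; simpl shift.
  - rewrite qnum_INR by assumption; simpl Enk; simpl pow; rewrite !Rplus_0_l; field; lra.
  - change (Enk a b q (S n) (S k)) with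
      (Rpower q (b + INR (S k) - 1) * qnum q (INR (S n) - INR (S k) + a) * Enk a b q n k
       + qnum q (INR (S k) + b) * Enk a b q n (S k)).
    rewrite (Rplus_comm (INR (S k)) b), (qnum_plus q hq1 b (INR (S k))).
    replace (b + INR (S k) - 1) with (b + INR k) by (rewrite S_INR; ring).
    replace (INR (S n) - INR (S k) + a) with (INR n + a + - INR k) by (rewrite !S_INR; ring).
    unfold qnum; rewrite !Rpower_plus, Rpower_Ropp.
    pose proof (Rpower_pos q (INR k)); field; split; lra.
Qed.

Lemma conv_Enk_S_qbin_coef n m :
  conv (Enk a b q (S n)) (qbin_coef q (Rpower q (INR n + a + b) * q)) m =
  qnum q (INR m + b) * conv (Enk a b q n) (qbin_coef q (Rpower q (INR n + a + b))) m.
Proof.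
  set (z := Rpower q (INR n + a + b)); set (e := Enk a b q n); set (C := qbin_coef q (z * q)).
  assert (Hdil : conv e (qbin_coef q z) m = conv e C m - z * shift (conv e C) m).
  { rewrite (qbin_coef_dilate q hq0 hq1 z), conv_minus_r, conv_scal_r, conv_shift_r.
    reflexivity. }
  assert (Heuler : qnum q (INR m) * conv e (qbin_coef q z) m =
    (1 - z) / (1 - q) * shift (conv e C) m + conv (qeuler q e) C m
    - shift (conv (qeuler q e) C) m).
  { change (qnum q (INR m) * conv e (qbin_coef q z) m)
      with (qeuler q (conv e (qbin_coef q z)) m).
    rewrite qeuler_conv, qeuler_qbin_coef, qdil_qbin_coef by assumption.
    rewrite conv_scal_r, conv_shift_r, conv_minus_r, conv_shift_r; unfold C; ring. }
  assert (Hrec : conv (Enk a b q (S n)) C m =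
    qnum q b * conv e C m + Rpower q b * qnum q (INR n + a) * shift (conv e C) m
    + Rpower q b * conv (qeuler q e) C m - Rpower q b * shift (conv (qeuler q e) C) m).
  { rewrite Enk_S_shift, conv_minus_l, !conv_plus_l, !conv_scal_l, !conv_shift_l.
    reflexivity. }
  rewrite Hrec, (Rplus_comm (INR m) b), (qnum_plus q hq1 b (INR m)).
  rewrite Rmult_plus_distr_r, (Rmult_assoc (Rpower q b) (qnum q (INR m))), Heuler, Hdil.
  unfold z; rewrite Rpower_plus; unfold qnum; field; lra.
Qed.

Lemma conv_Enk_qbin_coef n j :
  conv (Enk a b q n) (qbin_coef q (Rpower q (INR n + a + b))) j =
  qbin_coef q (Rpower q (a + b)) j * qnum q (INR j + b) ^ n.
Proof.
  revert j; induction n as [|n IH]; intros j.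
  - replace (Enk a b q 0) with delta0 by (extensionality k; destruct k; reflexivity).
    rewrite conv_delta0_l; simpl INR; rewrite Rplus_0_l; ring.
  - replace (INR (S n) + a + b) with (INR n + a + b + 1) by (rewrite S_INR; ring).
    rewrite Rpower_plus, Rpower_1 by exact hq0.
    rewrite conv_Enk_S_qbin_coef, IH; simpl; ring.
Qed.

Lemma Enk_qbinom_sum n j :
  sum_f_R0 (fun k => qbinom q (INR j - INR k + INR n + a + b - 1) (j - k) * Enk a b q n k) j
  = qbinom q (INR j + a + b - 1) j * qnum q (INR j + b) ^ n.
Proof.
  replace (INR j + a + b - 1) with (INR j + (a + b) - 1) by ring.
  rewrite qbinom_eq_qbin_coef, <- conv_Enk_qbin_coef.
  unfold conv; apply sum_eq; intros k Hk.
  replace (INR j - INR k + INR n + a + b - 1) with (INR (j - k) + (INR n + a + b) - 1)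
    by (rewrite minus_INR by exact Hk; ring).
  rewrite qbinom_eq_qbin_coef; ring.
Qed.

Lemma Enk_qbinom_inversion n k :
  Enk a b q n k =
  sum_f_R0 (fun j => qbinom q (INR n + a + b) (k - j) * qbinom q (INR j + a + b - 1) j
                     * (-1) ^ (k - j) * q ^ ((k - j) * (k - j - 1) / 2)
                     * qnum q (b + INR j) ^ n) k.
Proof.
  set (z := Rpower q (INR n + a + b)).
  rewrite <- (conv_delta0_r (Enk a b q n) k), <- (conv_qbin_coef_inv q hq0 hq1 z),
    <- conv_assoc.
  unfold conv at 1; apply sum_eq; intros j Hj.
  unfold z; rewrite conv_Enk_qbin_coef, <- qbinom_signed_eq_qbin_inv by assumption.
  replace (INR j + a + b - 1) with (INR j + (a + b) - 1) by ring.
  rewrite qbinom_eq_qbin_coef, (Rplus_comm b (INR j)); ring.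
Qed.

Lemma En_recurrence n x : x <> 0 ->
  En a b q (S n) x =
  (qnum q b + Rpower q b * qnum q (INR n + a) * x) * En a b q n x
  + (1 - x) * x * Rpower q b * qderiv q (En a b q n) x.
Proof.
  intros hx; unfold qderiv.
  change (En a b q (S n) x) with (polyval (Enk a b q (S n)) (S n) x).
  change (En a b q n) with (polyval (Enk a b q n) n).
  rewrite polyval_qdiff, Enk_S_shift by assumption.
  rewrite polyval_minus, !polyval_plus, !polyval_scal, !polyval_shift.
  rewrite (polyval_S_top0 (Enk a b q n)) by (apply Enk_gt; lia).
  rewrite (polyval_S_top0 (qeuler q (Enk a b q n)))
    by (unfold qeuler; rewrite Enk_gt by lia; ring).
  field; split; lra.
Qed.

End Eulerian.

(** * Infinite q-Pochhammer products and the q-binomial theorem *)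

Lemma is_series_R_partial (a : nat -> R) (l : R) :
  is_series a l <-> is_lim_seq (fun N => sum_f_R0 a N) l.
Proof.
  split; intros H.
  - apply (is_lim_seq_ext (sum_n a)); [intros; apply sum_n_Reals | exact H].
  - apply (is_lim_seq_ext _ (sum_n a)) in H; [exact H | intros; symmetry; apply sum_n_Reals].
Qed.

(* Specializations of Coquelicot's lemmas on normed modules, which keep the
   goals in [R] so that [ring] and [field] apply to them. *)
Lemma is_series_R_ext (a b : nat -> R) (l : R) :
  (forall n, a n = b n) -> is_series a l -> is_series b l.
Proof. apply is_series_ext. Qed.

Lemma is_series_R_plus (a b : nat -> R) (la lb : R) :
  is_series a la -> is_series b lb -> is_series (fun n => a n + b n) (la + lb).
Proof. apply (is_series_plus a b). Qed.

Lemma is_series_R_minus (a b : nat -> R) (la lb : R) :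
  is_series a la -> is_series b lb -> is_series (fun n => a n - b n) (la - lb).
Proof. apply (is_series_minus a b). Qed.

Lemma is_series_R_scal (c : R) (a : nat -> R) (l : R) :
  is_series a l -> is_series (fun n => c * a n) (c * l).
Proof. apply (is_series_scal c a). Qed.

Lemma ex_series_R_le (a b : nat -> R) :
  (forall n, Rabs (a n) <= b n) -> ex_series b -> ex_series a.
Proof. apply (@ex_series_le R_AbsRing R_CompleteNormedModule). Qed.

Lemma is_series_R_S (a : nat -> R) (l : R) :
  is_series a l -> is_series (fun n => a (S n)) (l - a 0%nat).
Proof.
  intros H; apply is_series_incr_1.
  assert (E : l - a 0%nat + a 0%nat = l) by ring.
  rewrite <- E in H; exact H.
Qed.

Lemma is_series_finite (g : nat -> R) N :
  (forall k, (N < k)%nat -> g k = 0) -> is_series g (sum_f_R0 g N).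
Proof.
  intros Hg; apply is_series_R_partial, (is_lim_seq_incr_n _ N).
  apply (is_lim_seq_ext (fun _ => sum_f_R0 g N)); [|apply is_lim_seq_const].
  intros M; induction M as [|M IH]; [reflexivity|].
  replace (S M + N)%nat with (S (M + N)) by lia; rewrite tech5, Hg, IH by lia; ring.
Qed.

Lemma is_series_geom_scal K r : Rabs r < 1 -> is_series (fun l => K * r ^ l) (K / (1 - r)).
Proof. intros Hr; apply (is_series_R_scal K (fun l => r ^ l)), is_series_geom, Hr. Qed.

Lemma is_lim_seq_telescoping (u : nat -> R) (L : R) :
  is_series (fun m => u (S m) - u m) L -> is_lim_seq u (u 0%nat + L).
Proof.
  intros H; apply is_series_R_partial in H.
  apply is_lim_seq_incr_1,
    (is_lim_seq_ext (fun N => u 0%nat + sum_f_R0 (fun m => u (S m) - u m) N)).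
  - intros N; induction N as [|N IH]; simpl; [ring | rewrite <- IH; ring].
  - apply is_lim_seq_plus'; [apply is_lim_seq_const | exact H].
Qed.

Lemma pow_bounds_01 q m : 0 < q < 1 -> 0 < q ^ m <= 1.
Proof.
  intros Hq; split; [apply pow_lt; lra|].
  rewrite <- (pow1 m); apply pow_incr; lra.
Qed.

Lemma exp_le_exp x y : x <= y -> exp x <= exp y.
Proof. intros [H|H]; [left; apply exp_increasing; exact H | subst; lra]. Qed.

Lemma one_minus_ge_exp s r : 0 <= s <= r -> r < 1 -> exp (- (s / (1 - r))) <= 1 - s.
Proof.
  intros Hs Hr.
  assert (Hinv : 1 / (1 - s) <= exp (s / (1 - s))).
  { replace (1 / (1 - s)) with (1 + s / (1 - s)) by (field; lra); apply exp_ineq1_le. }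
  apply Rle_trans with (exp (- (s / (1 - s)))).
  - apply exp_le_exp, Ropp_le_contravar; unfold Rdiv.
    apply Rmult_le_compat_l; [lra|]; apply Rinv_le_contravar; lra.
  - rewrite exp_Ropp; replace (1 - s) with (/ (1 / (1 - s))) at 2 by (field; lra).
    apply Rinv_le_contravar; [apply Rdiv_lt_0_compat; lra | exact Hinv].
Qed.

Section QAnalysis.

Variable q : R.
Hypothesis hq : 0 < q < 1.

Lemma qpoch_fin_abs_le_exp y m :
  Rabs (qpoch_fin y q m) <= exp (Rabs y * (1 - q ^ m) / (1 - q)).
Proof.
  induction m as [|m IH].
  - simpl; replace (Rabs y * (1 - 1) / (1 - q)) with 0 by (field; lra).
    rewrite exp_0, Rabs_R1; lra.
  - simpl qpoch_fin; rewrite Rabs_mult.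
    replace (Rabs y * (1 - q ^ S m) / (1 - q))
      with (Rabs y * (1 - q ^ m) / (1 - q) + Rabs y * q ^ m) by (simpl; field; lra).
    rewrite exp_plus; apply Rmult_le_compat; try apply Rabs_pos; [exact IH|].
    eapply Rle_trans; [|apply exp_ineq1_le].
    pose proof (pow_bounds_01 q m hq).
    eapply Rle_trans; [apply Rabs_triang|].
    rewrite Rabs_R1, Rabs_Ropp, Rabs_mult, (Rabs_pos_eq (q ^ m)); lra.
Qed.

Lemma qpoch_fin_abs_bounded y m : Rabs (qpoch_fin y q m) <= exp (Rabs y / (1 - q)).
Proof.
  eapply Rle_trans; [apply qpoch_fin_abs_le_exp|].
  apply exp_le_exp; pose proof (pow_bounds_01 q m hq); pose proof (Rabs_pos y).
  unfold Rdiv; apply Rmult_le_compat_r; [left; apply Rinv_0_lt_compat; lra | nra].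
Qed.

Lemma qpoch_fin_abs_ge_exp y m : Rabs y < 1 ->
  exp (- (Rabs y * (1 - q ^ m) / ((1 - Rabs y) * (1 - q)))) <= Rabs (qpoch_fin y q m).
Proof.
  intros Hy; induction m as [|m IH].
  - simpl; replace (Rabs y * (1 - 1) / ((1 - Rabs y) * (1 - q))) with 0 by (field; lra).
    rewrite Ropp_0, exp_0, Rabs_R1; lra.
  - simpl qpoch_fin; rewrite Rabs_mult.
    replace (- (Rabs y * (1 - q ^ S m) / ((1 - Rabs y) * (1 - q)))) with
      (- (Rabs y * (1 - q ^ m) / ((1 - Rabs y) * (1 - q))) + - (Rabs y * q ^ m / (1 - Rabs y)))
      by (simpl; field; lra).
    rewrite exp_plus; apply Rmult_le_compat; try (left; apply exp_pos); [exact IH|].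
    pose proof (pow_bounds_01 q m hq); pose proof (Rabs_pos y).
    eapply Rle_trans; [apply (one_minus_ge_exp (Rabs y * q ^ m) (Rabs y)); [split; nra | lra]|].
    pose proof (Rabs_triang_inv 1 (y * q ^ m)) as Htri.
    rewrite Rabs_R1, Rabs_mult, (Rabs_pos_eq (q ^ m)) in Htri; lra.
Qed.

Lemma qpoch_fin_abs_bounded_below y m : Rabs y < 1 ->
  exp (- (Rabs y / ((1 - Rabs y) * (1 - q)))) <= Rabs (qpoch_fin y q m).
Proof.
  intros Hy; eapply Rle_trans; [|apply qpoch_fin_abs_ge_exp; exact Hy].
  apply exp_le_exp, Ropp_le_contravar; pose proof (pow_bounds_01 q m hq); pose proof (Rabs_pos y).
  unfold Rdiv; apply Rmult_le_compat_r; [|nra].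
  left; apply Rinv_0_lt_compat, Rmult_lt_0_compat; lra.
Qed.

Lemma qpoch_fin_neq0 y m : Rabs y < 1 -> qpoch_fin y q m <> 0.
Proof.
  intros Hy Hzero; pose proof (qpoch_fin_abs_bounded_below y m Hy) as Hb.
  rewrite Hzero, Rabs_R0 in Hb; pose proof (exp_pos (- (Rabs y / ((1 - Rabs y) * (1 - q))))); lra.
Qed.

Lemma qpoch_fin_cvg y : is_lim_seq (fun m => qpoch_fin y q m) (qpoch_inf y q).
Proof.
  set (K := exp (Rabs y / (1 - q))).
  assert (Hinc : ex_series (fun m => qpoch_fin y q (S m) - qpoch_fin y q m)).
  { apply (ex_series_R_le _ (fun m => Rabs y * K * q ^ m)).
    - intros m; simpl qpoch_fin.
      replace (qpoch_fin y q m * (1 - y * q ^ m) - qpoch_fin y q m)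
        with (- (qpoch_fin y q m * y * q ^ m)) by ring.
      rewrite Rabs_Ropp, !Rabs_mult, (Rabs_pos_eq (q ^ m)) by (apply pow_le; lra).
      apply Rmult_le_compat_r; [apply pow_le; lra|]; rewrite Rmult_comm.
      apply Rmult_le_compat_l; [apply Rabs_pos | apply qpoch_fin_abs_bounded].
    - exists (Rabs y * K * / (1 - q)).
      apply (is_series_R_scal (Rabs y * K) (fun m => q ^ m)), is_series_geom.
      rewrite Rabs_pos_eq; lra. }
  destruct Hinc as [L HL]; apply is_lim_seq_telescoping in HL.
  unfold qpoch_inf; rewrite (is_lim_seq_unique (fun m => qpoch_fin y q m) _ HL); exact HL.
Qed.

Lemma qpoch_inf_neq0 y : Rabs y < 1 -> qpoch_inf y q <> 0.
Proof.
  intros Hy Hzero; pose proof (qpoch_fin_cvg y) as Hcvg; apply is_lim_seq_abs in Hcvg.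
  pose proof (is_lim_seq_le _ _ _ _ (fun m => qpoch_fin_abs_bounded_below y m Hy)
    (is_lim_seq_const _) Hcvg) as Hle.
  simpl in Hle; rewrite Hzero, Rabs_R0 in Hle.
  pose proof (exp_pos (- (Rabs y / ((1 - Rabs y) * (1 - q))))); lra.
Qed.

Lemma qbin_coef_bounded z : exists K, 0 < K /\ forall l, Rabs (qbin_coef q z l) <= K.
Proof.
  assert (Hq : Rabs q < 1) by (rewrite Rabs_pos_eq; lra).
  exists (exp (Rabs z / (1 - q)) / exp (- (Rabs q / ((1 - Rabs q) * (1 - q))))); split.
  { apply Rdiv_lt_0_compat; apply exp_pos. }
  intros l; unfold qbin_coef; rewrite Rabs_div by (apply qpoch_fin_neq0; exact Hq).
  unfold Rdiv; apply Rmult_le_compat.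
  - apply Rabs_pos.
  - left; apply Rinv_0_lt_compat, Rabs_pos_lt, qpoch_fin_neq0; exact Hq.
  - apply qpoch_fin_abs_bounded.
  - apply Rinv_le_contravar; [apply exp_pos | apply qpoch_fin_abs_bounded_below; exact Hq].
Qed.

Lemma ex_series_qbin_abs z x :
  Rabs x < 1 -> ex_series (fun l => Rabs (qbin_coef q z l * x ^ l)).
Proof.
  intros Hx; destruct (qbin_coef_bounded z) as [K [HK Hb]].
  apply (ex_series_R_le _ (fun l => K * Rabs x ^ l)).
  - intros l; rewrite Rabs_Rabsolu, Rabs_mult, <- RPow_abs.
    apply Rmult_le_compat_r; [apply pow_le, Rabs_pos | apply Hb].
  - eexists; apply is_series_geom_scal; rewrite Rabs_Rabsolu; exact Hx.
Qed.

Definition qbin_series z x := Series (fun l => qbin_coef q z l * x ^ l).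

Lemma qbin_series_correct z x :
  Rabs x < 1 -> is_series (fun l => qbin_coef q z l * x ^ l) (qbin_series z x).
Proof. intros Hx; apply Series_correct, ex_series_Rabs, ex_series_qbin_abs, Hx. Qed.

Lemma qbin_series_functional z x : Rabs x < 1 ->
  qbin_series z x * (1 - x) = qbin_series z (q * x) * (1 - z * x).
Proof.
  intros Hx.
  assert (Hqx : Rabs (q * x) < 1).
  { rewrite Rabs_mult, (Rabs_pos_eq q) by lra; pose proof (Rabs_pos x); nra. }
  set (F := qbin_series z x); set (G := qbin_series z (q * x)).
  set (c := fun l => qbin_coef q z l * x ^ l - qbin_coef q z l * (q * x) ^ l).
  assert (Hc : is_series c (F - G))
    by (apply is_series_R_minus; apply qbin_series_correct; assumption).
  assert (Hstep : forall l,
    c (S l) = x * (qbin_coef q z l * x ^ l - z * (qbin_coef q z l * (q * x) ^ l))).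
  { intros l; unfold c, qbin_coef; simpl qpoch_fin; rewrite !Rpow_mult_distr.
    pose proof (qpoch_fin_neq0 q l ltac:(rewrite Rabs_pos_eq; lra)).
    pose proof (pow_lt_1_compat q (S l) ltac:(lra) ltac:(lia)); simpl pow in *.
    field; repeat split; try lra; assumption. }
  apply is_series_R_S, (is_series_R_ext _ _ _ Hstep), is_series_unique in Hc.
  assert (Hc' : is_series
    (fun l => x * (qbin_coef q z l * x ^ l - z * (qbin_coef q z l * (q * x) ^ l)))
    (x * (F - z * G))).
  { apply is_series_R_scal, is_series_R_minus; [|apply is_series_R_scal];
      apply qbin_series_correct; assumption. }
  apply is_series_unique in Hc'.
  replace (c 0%nat) with 0 in Hc by (unfold c; simpl; ring).
  rewrite Hc in Hc'; nra.
Qed.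

Lemma qbin_series_qpoch z x k : Rabs x < 1 ->
  qbin_series z x * qpoch_fin x q k = qbin_series z (q ^ k * x) * qpoch_fin (z * x) q k.
Proof.
  intros Hx; induction k as [|k IH]; [simpl; rewrite Rmult_1_l; reflexivity|].
  assert (Hk : Rabs (q ^ k * x) < 1).
  { rewrite Rabs_mult, Rabs_pos_eq by (apply pow_le; lra).
    pose proof (pow_bounds_01 q k hq); pose proof (Rabs_pos x); nra. }
  simpl qpoch_fin; replace (q ^ S k * x) with (q * (q ^ k * x)) by (simpl; ring).
  transitivity (qbin_series z x * qpoch_fin x q k * (1 - q ^ k * x)); [ring|].
  rewrite IH.
  transitivity (qbin_series z (q ^ k * x) * (1 - q ^ k * x) * qpoch_fin (z * x) q k); [ring|].
  rewrite qbin_series_functional by exact Hk; ring.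
Qed.

Lemma qbin_series_sub1_bound z : exists K, 0 < K /\ forall w, Rabs w < 1 ->
  Rabs (qbin_series z w - 1) <= Rabs w * (K / (1 - Rabs w)).
Proof.
  destruct (qbin_coef_bounded z) as [K [HK Hb]]; exists K; split; [exact HK|].
  intros w Hw.
  set (a := fun l => qbin_coef q z (S l) * w ^ S l).
  assert (Ha : is_series a (qbin_series z w - 1)).
  { pose proof (is_series_R_S _ _ (qbin_series_correct z w Hw)) as H; cbv beta in H.
    replace (qbin_coef q z 0 * w ^ 0) with 1 in H by (unfold qbin_coef; simpl; field).
    exact H. }
  assert (Hgeom : is_series (fun l => Rabs w * K * Rabs w ^ l) (Rabs w * (K / (1 - Rabs w)))).
  { replace (Rabs w * (K / (1 - Rabs w))) with (Rabs w * K / (1 - Rabs w)) by (field; lra).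
    apply is_series_geom_scal; rewrite Rabs_Rabsolu; exact Hw. }
  rewrite <- (is_series_unique _ _ Ha), <- (is_series_unique _ _ Hgeom).
  assert (Hdom : forall l, 0 <= Rabs (a l) <= Rabs w * K * Rabs w ^ l).
  { intros l; split; [apply Rabs_pos|]; unfold a.
    rewrite Rabs_mult, <- RPow_abs.
    replace (Rabs w * K * Rabs w ^ l) with (K * Rabs w ^ S l) by (simpl; ring).
    apply Rmult_le_compat_r; [apply pow_le, Rabs_pos | apply Hb]. }
  eapply Rle_trans; [apply Series_Rabs|apply Series_le; [exact Hdom | eexists; exact Hgeom]].
  apply (ex_series_R_le _ (fun l => Rabs w * K * Rabs w ^ l)); [|eexists; exact Hgeom].
  intros l; rewrite Rabs_Rabsolu; apply Hdom.
Qed.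

Lemma qbin_series_geom_cvg z x : Rabs x < 1 ->
  is_lim_seq (fun k => qbin_series z (q ^ k * x)) 1.
Proof.
  intros Hx; destruct (qbin_series_sub1_bound z) as [K [HK Hbound]].
  set (B := Rabs x * (K / (1 - Rabs x))).
  assert (Habs : forall k, Rabs (q ^ k * x) = q ^ k * Rabs x)
    by (intros k; rewrite Rabs_mult, Rabs_pos_eq by (apply pow_le; lra); reflexivity).
  assert (Hsmall : forall k, Rabs (q ^ k * x) <= Rabs x).
  { intros k; rewrite Habs; pose proof (pow_bounds_01 q k hq); pose proof (Rabs_pos x); nra. }
  assert (Hclose : forall k, Rabs (qbin_series z (q ^ k * x) - 1) <= q ^ k * B).
  { intros k; eapply Rle_trans; [apply Hbound; pose proof (Hsmall k); lra|].
    unfold B; rewrite <- Rmult_assoc, <- Habs.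
    apply Rmult_le_compat_l; [apply Rabs_pos|]; unfold Rdiv.
    apply Rmult_le_compat_l; [lra|]; apply Rinv_le_contravar; pose proof (Hsmall k); lra. }
  assert (HB : is_lim_seq (fun k => q ^ k * B) 0).
  { replace 0 with (0 * B) by ring; apply is_lim_seq_mult'; [|apply is_lim_seq_const].
    apply is_lim_seq_geom; rewrite Rabs_pos_eq; lra. }
  apply (is_lim_seq_le_le (fun k => 1 - q ^ k * B) _ (fun k => 1 + q ^ k * B)).
  - intros k; pose proof (Hclose k) as Hk; apply Rabs_le_between' in Hk; lra.
  - replace (Finite 1) with (Finite (1 - 0)) by (f_equal; ring).
    apply is_lim_seq_minus'; [apply is_lim_seq_const | exact HB].
  - replace (Finite 1) with (Finite (1 + 0)) by (f_equal; ring).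
    apply is_lim_seq_plus'; [apply is_lim_seq_const | exact HB].
Qed.

Lemma qbin_series_eq_qpoch_ratio z x : Rabs x < 1 ->
  qbin_series z x = qpoch_inf (z * x) q / qpoch_inf x q.
Proof.
  intros Hx.
  assert (Hlim : is_lim_seq
    (fun k => qbin_series z (q ^ k * x) * qpoch_fin (z * x) q k / qpoch_fin x q k)
    (1 * qpoch_inf (z * x) q / qpoch_inf x q)).
  { apply is_lim_seq_div'; [apply is_lim_seq_mult' | |].
    - apply qbin_series_geom_cvg, Hx.
    - apply qpoch_fin_cvg.
    - apply qpoch_fin_cvg.
    - apply qpoch_inf_neq0, Hx. }
  apply (is_lim_seq_ext _ (fun _ => qbin_series z x)) in Hlim.
  - apply is_lim_seq_unique in Hlim; rewrite Lim_seq_const in Hlim.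
    injection Hlim as Hlim; rewrite Hlim, Rmult_1_l; reflexivity.
  - intros k; rewrite <- qbin_series_qpoch by exact Hx.
    field; apply qpoch_fin_neq0, Hx.
Qed.

Theorem q_binomial_theorem z x : Rabs x < 1 ->
  is_series (fun l => qbin_coef q z l * x ^ l) (qpoch_inf (z * x) q / qpoch_inf x q).
Proof.
  intros Hx.
  replace (qpoch_inf (z * x) q / qpoch_inf x q) with (qbin_series z x)
    by (apply qbin_series_eq_qpoch_ratio; exact Hx).
  apply qbin_series_correct, Hx.
Qed.

End QAnalysis.

Lemma is_series_polyval (g : nat -> R) N x :
  (forall k, (N < k)%nat -> g k = 0) -> is_series (fun k => g k * x ^ k) (polyval g N x).
Proof. intros Hg; apply is_series_finite; intros k Hk; rewrite Hg by exact Hk; ring. Qed.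

Lemma ex_series_polyval_abs (g : nat -> R) N x :
  (forall k, (N < k)%nat -> g k = 0) -> ex_series (fun k => Rabs (g k * x ^ k)).
Proof.
  intros Hg; eexists; apply is_series_finite.
  intros k Hk; rewrite Hg, Rmult_0_l, Rabs_R0 by exact Hk; reflexivity.
Qed.

Lemma En_div_qpochR_series a b q n x :
  0 < q < 1 -> Rabs x < 1 -> Rabs x * Rpower q (a + b) < 1 ->
  is_series (fun j => x ^ j * qbinom q (INR j + a + b - 1) j * qnum q (INR j + b) ^ n)
            (En a b q n x / qpochR x q (INR n + a + b)).
Proof.
  intros Hq Hx Hxab; assert (hq0 : 0 < q) by lra; assert (hq1 : q <> 1) by lra.
  set (z := Rpower q (INR n + a + b)).
  assert (Hxz : Rabs (x * z) < 1).
  { unfold z; replace (INR n + a + b) with (INR n + (a + b)) by ring.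
    rewrite Rpower_plus, Rpower_pow, !Rabs_mult, (Rabs_pos_eq (q ^ n)),
      (Rabs_pos_eq (Rpower q (a + b))) by (try apply pow_le; try (left; apply Rpower_pos); lra).
    pose proof (pow_bounds_01 q n Hq); pose proof (Rabs_pos x); pose proof (Rpower_pos q (a + b)).
    nra. }
  pose proof (is_series_mult _ _ _ _
    (is_series_polyval (Enk a b q n) n x (Enk_gt a b q n))
    (q_binomial_theorem q Hq z x Hx)
    (ex_series_polyval_abs (Enk a b q n) n x (Enk_gt a b q n))
    (ex_series_qbin_abs q Hq z x Hx)) as Hprod.
  replace (En a b q n x / qpochR x q (INR n + a + b))
    with (polyval (Enk a b q n) n x * (qpoch_inf (z * x) q / qpoch_inf x q)).
  - refine (is_series_R_ext _ _ _ _ Hprod); intros j; cbv beta.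
    replace (INR j + a + b - 1) with (INR j + (a + b) - 1) by ring.
    rewrite qbinom_eq_qbin_coef, Rmult_assoc, <- (conv_Enk_qbin_coef a b q hq0 hq1 n j).
    unfold conv; rewrite scal_sum; apply sum_eq; intros k Hk.
    replace (x ^ j) with (x ^ k * x ^ (j - k)) by (rewrite <- pow_add; f_equal; lia).
    unfold z; ring.
  - pose proof (qpoch_inf_neq0 q Hq x Hx); pose proof (qpoch_inf_neq0 q Hq (x * z) Hxz).
    change (En a b q n x) with (polyval (Enk a b q n) n x).
    unfold qpochR; fold z; rewrite (Rmult_comm z x).
    field; split; assumption.
Qed.

(** * Interchanging summations *)

Lemma series_tail_le (a b : nat -> R) (A B : R) J :
  (forall j, Rabs (a j) <= b j) -> is_series a A -> is_series b B ->
  Rabs (A - sum_f_R0 a J) <= B - sum_f_R0 b J.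
Proof.
  intros Hab HA HB.
  apply is_series_R_partial, (is_lim_seq_incr_n _ J) in HA.
  apply is_series_R_partial, (is_lim_seq_incr_n _ J) in HB.
  assert (Hpart : forall K, Rabs (sum_f_R0 a (K + J) - sum_f_R0 a J)
                            <= sum_f_R0 b (K + J) - sum_f_R0 b J).
  { induction K as [|K IH]; simpl Nat.add.
    - rewrite !Rminus_diag, Rabs_R0; lra.
    - rewrite !tech5; pose proof (Hab (S (K + J))).
      replace (sum_f_R0 a (K + J) + a (S (K + J)) - sum_f_R0 a J)
        with (sum_f_R0 a (K + J) - sum_f_R0 a J + a (S (K + J))) by ring.
      eapply Rle_trans; [apply Rabs_triang | lra]. }
  apply (is_lim_seq_le _ _ (Rabs (A - sum_f_R0 a J)) (B - sum_f_R0 b J) Hpart).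
  - exact (is_lim_seq_abs _ _ (is_lim_seq_minus' _ _ _ _ HA (is_lim_seq_const _))).
  - apply (is_lim_seq_minus' _ _ _ _ HB (is_lim_seq_const _)).
Qed.

Lemma sum_f_R0_le_series (g : nat -> R) (L : R) N :
  (forall j, 0 <= g j) -> is_series g L -> sum_f_R0 g N <= L.
Proof.
  intros Hg HL.
  assert (Hzero : is_series (fun _ => 0) 0)
    by exact (is_series_finite (fun _ => 0) 0 (fun _ _ => eq_refl)).
  assert (Ht : Rabs (0 - sum_f_R0 (fun _ => 0) N) <= L - sum_f_R0 g N).
  { apply series_tail_le; [intros j; rewrite Rabs_R0; apply Hg | exact Hzero | exact HL]. }
  pose proof (Rabs_pos (0 - sum_f_R0 (fun _ => 0) N)); lra.
Qed.

Lemma is_lim_seq_sum_f_R0 (u : nat -> nat -> R) (l : nat -> R) J :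
  (forall j, is_lim_seq (fun N => u N j) (l j)) ->
  is_lim_seq (fun N => sum_f_R0 (u N) J) (sum_f_R0 l J).
Proof.
  intros Hu; induction J as [|J IH]; simpl; [apply Hu|].
  apply is_lim_seq_plus'; [exact IH | apply Hu].
Qed.

Lemma is_series_sum_f_R0 (a : nat -> nat -> R) (r : nat -> R) N :
  (forall n, is_series (a n) (r n)) ->
  is_series (fun j => sum_f_R0 (fun n => a n j) N) (sum_f_R0 r N).
Proof.
  intros Ha; induction N as [|N IH]; simpl; [apply Ha|].
  apply is_series_R_plus; [exact IH | apply Ha].
Qed.

Lemma is_lim_seq_series_dominated (f : nat -> nat -> R) (s g M : nat -> R) (SM : R) :
  (forall N, is_series (f N) (s N)) ->
  (forall j, is_lim_seq (fun N => f N j) (g j)) ->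
  (forall N j, Rabs (f N j) <= M j) -> is_series M SM ->
  exists S, is_series g S /\ is_lim_seq s S.
Proof.
  intros Hf Hfg Hdom HM.
  assert (Hg : forall j, Rabs (g j) <= M j).
  { intros j; apply (is_lim_seq_le (fun N => Rabs (f N j)) (fun _ => M j) (Rabs (g j)) (M j)).
    - intros N; apply Hdom.
    - exact (is_lim_seq_abs _ _ (Hfg j)).
    - apply is_lim_seq_const. }
  assert (HgS : is_series g (Series g)).
  { apply Series_correct, ex_series_Rabs, (ex_series_R_le _ M); [|eexists; exact HM].
    intros j; rewrite Rabs_Rabsolu; apply Hg. }
  exists (Series g); split; [exact HgS|].
  apply is_lim_seq_Reals; intros eps Heps.
  assert (HMp := HM); apply is_series_R_partial, is_lim_seq_Reals in HMp.
  destruct (HMp (eps / 4) ltac:(lra)) as [J HJ].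
  pose proof (HJ J (Nat.le_refl J)) as Htail; unfold R_dist in Htail.
  assert (Htail0 : sum_f_R0 M J <= SM).
  { apply sum_f_R0_le_series; [|exact HM].
    intros j; eapply Rle_trans; [apply Rabs_pos | apply (Hdom 0%nat)]. }
  rewrite Rabs_minus_sym, Rabs_pos_eq in Htail by lra.
  pose proof (is_lim_seq_sum_f_R0 f g J Hfg) as Hfin; apply is_lim_seq_Reals in Hfin.
  destruct (Hfin (eps / 2) ltac:(lra)) as [N0 HN0].
  exists N0; intros N HN; unfold R_dist.
  pose proof (HN0 N HN) as Hmid; unfold R_dist in Hmid.
  pose proof (series_tail_le (f N) M (s N) SM J (Hdom N) (Hf N) HM) as HfN.
  pose proof (series_tail_le g M (Series g) SM J Hg HgS HM) as Hg0.
  replace (s N - Series g) with ((s N - sum_f_R0 (f N) J)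
    + (sum_f_R0 (f N) J - sum_f_R0 g J) - (Series g - sum_f_R0 g J)) by ring.
  eapply Rle_lt_trans; [apply Rabs_triang|].
  eapply Rle_lt_trans; [apply Rplus_le_compat_r, Rabs_triang|].
  rewrite Rabs_Ropp; lra.
Qed.

Lemma double_series_swap (a : nat -> nat -> R) (r c B : nat -> R) :
  (forall n, is_series (a n) (r n)) ->
  (forall j, is_series (fun n => a n j) (c j)) ->
  (forall j, is_series (fun n => Rabs (a n j)) (B j)) -> ex_series B ->
  exists S, is_series r S /\ is_series c S.
Proof.
  intros Hr Hc HB [SB HSB].
  destruct (is_lim_seq_series_dominated (fun N j => sum_f_R0 (fun n => a n j) N)
              (fun N => sum_f_R0 r N) c B SB) as [S [HcS HrS]].
  - intros N; apply is_series_sum_f_R0, Hr.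
  - intros j; apply is_series_R_partial, Hc.
  - intros N j; eapply Rle_trans; [apply sum_f_R0_triangle|].
    apply (sum_f_R0_le_series (fun n => Rabs (a n j))); [intros; apply Rabs_pos | apply HB].
  - exact HSB.
  - exists S; split; [apply is_series_R_partial, HrS | exact HcS].
Qed.

Lemma is_series_exp y : is_series (fun n => y ^ n / INR (fact n)) (exp y).
Proof.
  apply (is_series_R_ext (fun n => / INR (fact n) * y ^ n)); [intros; unfold Rdiv; ring|].
  apply is_pseries_R, is_exp_Reals.
Qed.

Lemma qnum_abs_bounded q b j : 0 < q < 1 -> Rabs (qnum q (INR j + b)) <= (1 + Rpower q b) / (1 - q).
Proof.
  intros Hq; unfold qnum; rewrite Rabs_div, (Rabs_pos_eq (1 - q)) by lra.
  unfold Rdiv; apply Rmult_le_compat_r; [left; apply Rinv_0_lt_compat; lra|].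
  rewrite Rpower_plus, Rpower_pow by lra.
  pose proof (pow_bounds_01 q j Hq); pose proof (Rpower_pos q b).
  eapply Rle_trans; [apply Rabs_triang|].
  rewrite Rabs_R1, Rabs_Ropp, Rabs_mult, !Rabs_pos_eq by lra; nra.
Qed.

Lemma En_div_qpochR_exp_series a b q x t :
  0 < q < 1 -> Rabs x < 1 -> Rabs x * Rpower q (a + b) < 1 ->
  exists S,
    is_series (fun n => En a b q n x / qpochR x q (INR n + a + b) * t ^ n / INR (fact n)) S
    /\ is_series (fun j => x ^ j * qbinom q (INR j + a + b - 1) j
                           * exp (qnum q (INR j + b) * t)) S.
Proof.
  intros Hq Hx Hxab.
  set (c := fun j => x ^ j * qbinom q (INR j + a + b - 1) j).
  set (u := fun j => qnum q (INR j + b)).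
  set (U := (1 + Rpower q b) / (1 - q)).
  destruct (qbin_coef_bounded q Hq (Rpower q (a + b))) as [K [HK HKb]].
  assert (Hc : forall j, Rabs (c j) <= K * Rabs x ^ j).
  { intros j; unfold c; rewrite Rabs_mult, <- RPow_abs, Rmult_comm.
    replace (INR j + a + b - 1) with (INR j + (a + b) - 1) by ring.
    rewrite qbinom_eq_qbin_coef.
    apply Rmult_le_compat_r; [apply pow_le, Rabs_pos | apply HKb]. }
  assert (Hfact : forall n, 0 < INR (fact n)) by (intros; apply lt_0_INR, lt_O_fact).
  apply (double_series_swap (fun n j => c j * ((u j * t) ^ n / INR (fact n)))
    _ _ (fun j => Rabs (c j) * exp (Rabs (u j * t)))).
  - intros n.
    replace (En a b q n x / qpochR x q (INR n + a + b) * t ^ n / INR (fact n))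
      with (t ^ n / INR (fact n) * (En a b q n x / qpochR x q (INR n + a + b)))
      by (unfold Rdiv; ring).
    refine (is_series_R_ext _ _ _ _
      (is_series_R_scal _ _ _ (En_div_qpochR_series a b q n x Hq Hx Hxab))).
    intros j; unfold c, u; rewrite Rpow_mult_distr; unfold Rdiv; ring.
  - intros j; apply is_series_R_scal, is_series_exp.
  - intros j; refine (is_series_R_ext _ _ _ _ (is_series_R_scal (Rabs (c j)) _ _
      (is_series_exp (Rabs (u j * t))))).
    intros n; rewrite (Rabs_mult (c j)), Rabs_div, <- RPow_abs, (Rabs_pos_eq (INR (fact n)))
      by (first [apply Rgt_not_eq, Hfact | left; apply Hfact]); reflexivity.
  - apply (ex_series_R_le _ (fun j => K * exp (U * Rabs t) * Rabs x ^ j)).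
    + intros j; rewrite Rabs_mult, Rabs_Rabsolu, (Rabs_pos_eq (exp _)) by (left; apply exp_pos).
      replace (K * exp (U * Rabs t) * Rabs x ^ j) with (K * Rabs x ^ j * exp (U * Rabs t)) by ring.
      apply Rmult_le_compat; [apply Rabs_pos | left; apply exp_pos | apply Hc |].
      apply exp_le_exp; rewrite Rabs_mult; apply Rmult_le_compat_r; [apply Rabs_pos|].
      apply qnum_abs_bounded, Hq.
    + eexists; apply is_series_geom_scal; rewrite Rabs_Rabsolu; exact Hx.
Qed.

Theorem theorem1p2 (alpha beta q : R) (hq0 : 0 < q) (hq1 : q <> 1) :
  (* (i) *)
  (forall (n : nat) (x : R), (1 <= n)%nat -> x <> 0 ->
     En alpha beta q n x =
       (qnum q beta + Rpower q beta * qnum q (INR n - 1 + alpha) * x)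
         * En alpha beta q (n - 1) x
       + (1 - x) * x * Rpower q beta * qderiv q (En alpha beta q (n - 1)) x)
  /\
  (* (iv) *)
  (forall n j : nat,
     sum_f_R0 (fun k => qbinom q (INR j - INR k + INR n + alpha + beta - 1) (j - k)
                        * Enk alpha beta q n k) j
     = qbinom q (INR j + alpha + beta - 1) j * qnum q (INR j + beta) ^ n)
  /\
  (* (v) *)
  (forall n k : nat, (k <= n)%nat ->
     Enk alpha beta q n k =
     sum_f_R0 (fun j => qbinom q (INR n + alpha + beta) (k - j)
                        * qbinom q (INR j + alpha + beta - 1) j
                        * (-1) ^ (k - j) * q ^ (Nat.div ((k - j) * (k - j - 1)) 2)
                        * qnum q (beta + INR j) ^ n) k)
  /\
  (q < 1 ->
   (* (ii) *)
   (forall (n : nat) (x : R), Rabs x < 1 -> Rabs x * Rpower q (alpha + beta) < 1 ->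
      is_series (fun j => x ^ j * qbinom q (INR j + alpha + beta - 1) j
                          * qnum q (INR j + beta) ^ n)
                (En alpha beta q n x / qpochR x q (INR n + alpha + beta)))
   /\
   (* (iii) *)
   (forall x t : R, Rabs x < 1 -> Rabs x * Rpower q (alpha + beta) < 1 ->
      exists S : R,
        is_series (fun n => En alpha beta q n x / qpochR x q (INR n + alpha + beta)
                            * t ^ n / INR (fact n)) S
        /\ is_series (fun j => x ^ j * qbinom q (INR j + alpha + beta - 1) j
                               * exp (qnum q (INR j + beta) * t)) S)).
Proof.
  split; [|split; [|split]].
  - intros [|n] x Hn Hx; [lia|].
    replace (S n - 1)%nat with n by lia.
    replace (INR (S n) - 1 + alpha) with (INR n + alpha) by (rewrite S_INR; ring).
    apply En_recurrence; assumption.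
  - apply Enk_qbinom_sum; assumption.
  - intros n k _; apply Enk_qbinom_inversion; assumption.
  - intros hlt; split.
    + intros n x; apply En_div_qpochR_series; lra.
    + intros x t; apply En_div_qpochR_exp_series; lra.
Qed.
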